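(* Let $(X,\|\cdot,\cdot\|)$ be a linear 2-normed space and let $E$ be a nonempty (sequentially) closed and bounded subset of $X$. Let $T:E\to X$ be a strong accretive mapping. If $(I+T)(E)\supset E$, then the equation $Tx=\theta$ has a solution $x\in E$, where $\theta$ is the zero vector of $X$.
   Context: A linear 2-normed space is a real linear space $X$ of dimension greater than 1 with a function $\|\cdot,\cdot\|:X\times X\to\mathbb{R}$ such that: $\|x,y\|=0$ iff $x,y$ are linearly dependent; $\|x,y\|=\|y,x\|$; $\|\alpha x,y\|=|\alpha|\,\|x,y\|$; $\|x+y,z\|\le\|x,z\|+\|y,z\|$. A sequence $x_n\to x$ means $\|x_n-x,z\|\to0$ for every $z\in X$. $E$ is (sequentially) closed if every limit of a sequence in $E$ lies in $E$. For $e\in E$, $E$ is $e$-bounded if there is $M>0$ with $\|x,e\|\le M$ for all $x\in E$; $E$ is bounded if it is $e$-bounded for every $e\in E$. A mapping $T$ is strong accretive if, for a constant $k\in(0,1)$, for every $z\in X$ one has $\|(\lambda-k)(x-y),z\|\le\|(\lambda-1)(x-y)+(Tx-Ty),z\|$ for all $x,y$ in the domain of $T$ and all $\lambda>k$. *)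

From HB Require Import structures.
From mathcomp Require Import all_boot all_order all_algebra.
From mathcomp Require Import reals.
Set Implicit Arguments. Unset Strict Implicit. Unset Printing Implicit Defensive.
Import Order.TTheory GRing.Theory Num.Theory.
Local Open Scope ring_scope.

Definition lin_dep (R : realType) (X : lmodType R) (x y : X) : Prop :=
  exists a b : R, (a != 0 \/ b != 0) /\ a *: x + b *: y = 0.

Definition is_2norm (R : realType) (X : lmodType R) (N : X -> X -> R) : Prop :=
  (* dim X > 1 *)
  (exists x y : X, ~ lin_dep x y) /\
  (forall x y, N x y = 0 <-> lin_dep x y) /\
  (forall x y, N x y = N y x) /\
  (forall (a : R) x y, N (a *: x) y = `|a| * N x y) /\
  (forall x y z, N (x + y) z <= N x z + N y z).

Definition conv2 (R : realType) (X : lmodType R) (N : X -> X -> R)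
  (u : nat -> X) (x : X) : Prop :=
  forall z : X, forall eps : R, 0 < eps ->
    exists M : nat, forall n : nat, (M <= n)%N -> `|N (u n - x) z| < eps.

Definition closed2 (R : realType) (X : lmodType R) (N : X -> X -> R)
  (E : X -> Prop) : Prop :=
  forall (u : nat -> X) (x : X), (forall n, E (u n)) -> conv2 N u x -> E x.

Definition e_bounded (R : realType) (X : lmodType R) (N : X -> X -> R)
  (E : X -> Prop) (e : X) : Prop :=
  exists M : R, 0 < M /\ forall x, E x -> N x e <= M.

Definition bounded2 (R : realType) (X : lmodType R) (N : X -> X -> R)
  (E : X -> Prop) : Prop :=
  forall e, E e -> e_bounded N E e.

(* T, defined on E (values outside E are irrelevant), is strong accretive. *)
Definition strong_accretive (R : realType) (X : lmodType R) (N : X -> X -> R)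
  (E : X -> Prop) (T : X -> X) : Prop :=
  exists k : R, 0 < k /\ k < 1 /\
    forall z x y (lam : R), E x -> E y -> k < lam ->
      N ((lam - k) *: (x - y)) z <= N ((lam - 1) *: (x - y) + (T x - T y)) z.

(* Taking lambda = 2 in the accretivity inequality shows that the resolvent
   S = (I + T)^-1 : E -> E is a contraction for every seminorm ||., z||, with
   constant 1/(2 - k).  As X need not be complete, Picard iteration in X is not
   available.  Instead, with d = S x0 - x0, contracting ||., d|| (which vanishes
   on multiples of d) shows that S maps the line x0 + R d into itself.  There S
   is an ordinary contraction of a closed subset of R, so Banach's theorem gives
   a fixed point x = S x, i.e. T x = 0. *)
From HB Require Import structures.
From mathcomp Require Import all_boot all_order all_algebra.
From mathcomp Require Import all_classical all_reals all_analysis.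
From mathcomp Require Import lra.
Import Order.TTheory GRing.Theory Num.Theory.
Import numFieldNormedType.Exports.
Local Open Scope classical_set_scope.
Local Open Scope ring_scope.

Set Implicit Arguments.
Unset Strict Implicit.
Unset Printing Implicit Defensive.

Lemma seq_closed_closed (R : realType) (V : pseudoMetricType R) (A : set V) :
  (forall (u : nat -> V) l, (forall n, A (u n)) -> u @ \oo --> l -> A l) ->
  closed A.
Proof.
move=> Aseq; apply/closure_id; apply/seteqP; split; first exact: subset_closure.
move=> p clp.
have /choice[u Au] : forall n : nat, exists x, A x /\ ball p n.+1%:R^-1 x.
  by move=> n; apply: clp; apply: nbhsx_ballx.
apply: (Aseq u) => [n|]; first exact: (Au n).1.
apply/cvg_ballP => e e0; near=> n.
apply: (le_ball _ (Au n).2); apply: ltW.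
near: n; exact: (near_infty_natSinv_lt (PosNum e0)).
Unshelve. all: end_near. Qed.

Lemma closed_contraction_fixpoint (R : realType) (V : completeNormedModType R)
    (A : set V) (g : V -> V) (q : R) :
  closed A -> A !=set0 -> 0 <= q -> q < 1 ->
  (forall x, A x -> A (g x)) ->
  (forall x y, A x -> A y -> `|g x - g y| <= q * `|x - y|) ->
  exists2 x, A x & g x = x.
Proof.
move=> Acl A0 q0 q1 gA glip.
pose gA' : {fun A >-> A} := mkfun_fun (gA : set_fun A A g).
have gctr : is_contraction gA'.
  by exists (NngNum q0); split => // -[x y] [Ax Ay]; exact: glip.
by have [x Ax xE] := banach_fixed_point gctr Acl A0; exists x.
Qed.

Section LinearDependence.
Variables (R : realType) (X : lmodType R).

Lemma lin_depC (x y : X) : lin_dep x y -> lin_dep y x.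
Proof. by move=> [a [b [ab0 e]]]; exists b, a; rewrite addrC orC. Qed.

Lemma lin_depxx (x : X) : lin_dep x x.
Proof. by exists 1, (-1); rewrite scale1r scaleN1r subrr oner_neq0; auto. Qed.

Lemma lin_dep_scaler (v d : X) : d != 0 -> lin_dep v d -> exists r : R, v = r *: d.
Proof.
move=> d0 [a [b [ab0 e]]].
have a0 : a != 0.
  apply: contraPneq ab0 => a0; move: e; rewrite a0 scale0r add0r.
  by move/eqP; rewrite scaler_eq0 (negbTE d0) orbF => /eqP->; case=> /eqP.
exists (- (b / a)); apply: (scalerI a0).
rewrite scalerA mulrN mulrCA mulfV // mulr1 scaleNr.
by apply/eqP; rewrite -addr_eq0 e.
Qed.

Lemma exists_not_lin_dep (d : X) :
  (exists x y : X, ~ lin_dep x y) -> d != 0 -> exists z, ~ lin_dep d z.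
Proof.
move=> [x [y xy]] d0.
have [dx|] := pselect (lin_dep d x); last by exists x.
have [dy|] := pselect (lin_dep d y); last by exists y.
have [a xa] := lin_dep_scaler d0 (lin_depC dx).
have [b yb] := lin_dep_scaler d0 (lin_depC dy).
exfalso; apply: xy; rewrite xa yb; have [->|a0] := eqVneq a 0.
  by exists 1, 0; rewrite !scale0r scaler0 addr0 oner_neq0; auto.
by exists b, (- a); rewrite !scalerA mulrC mulNr scaleNr subrr oppr_eq0 a0; auto.
Qed.

End LinearDependence.

Section TwoNorm.
Variables (R : realType) (X : lmodType R) (N : X -> X -> R).
Hypothesis N2 : is_2norm N.

Lemma norm2_eq0 x y : N x y = 0 <-> lin_dep x y.
Proof. by case: N2 => _ []. Qed.

Lemma norm2xx x : N x x = 0.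
Proof. exact/norm2_eq0/lin_depxx. Qed.

Lemma norm2Z a x y : N (a *: x) y = `|a| * N x y.
Proof. by case: N2 => _ [_ [_ []]]. Qed.

Lemma ler_norm2D x y z : N (x + y) z <= N x z + N y z.
Proof. by case: N2 => _ [_ [_ []]]. Qed.

Lemma norm2_ge0 x z : 0 <= N x z.
Proof.
have := ler_norm2D x (- x) z.
rewrite subrr -(scale0r x) -scaleN1r !norm2Z normr0 mul0r normrN normr1 mul1r.
by rewrite -mulr2n pmulrn_lge0.
Qed.

Lemma norm2_gt0 x z : ~ lin_dep x z -> 0 < N x z.
Proof. by move=> xz; rewrite lt_def norm2_ge0 andbT; apply/eqP => /norm2_eq0. Qed.

Lemma exists_norm2_gt0 d : d != 0 -> exists z, 0 < N d z.
Proof.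
case: N2 => ind _ d0.
by have [z dz] := exists_not_lin_dep ind d0; exists z; exact: norm2_gt0.
Qed.

Lemma norm2_line x0 d a b z : N ((x0 + a *: d) - (x0 + b *: d)) z = `|a - b| * N d z.
Proof. by rewrite opprD addrACA subrr add0r -scalerBl norm2Z. Qed.

Lemma conv2_line x0 d (u : nat -> R) (l : R) :
  u @ \oo --> l -> conv2 N (fun n => x0 + u n *: d) (x0 + l *: d).
Proof.
move=> /cvgrPdist_lt ul z e e0; have [dz0|dz0] := eqVneq (N d z) 0.
  by exists 0%N => n _; rewrite norm2_line dz0 mulr0 normr0.
have dz : 0 < N d z by rewrite lt_def dz0 norm2_ge0.
have [M _ HM] := ul (e / N d z) (divr_gt0 e0 dz).
exists M => n Mn; rewrite norm2_line ger0_norm ?mulr_ge0 ?norm2_ge0 //.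
by rewrite distrC -ltr_pdivlMr //; exact: HM.
Qed.

Lemma strong_accretive_inv_lipschitz (E : X -> Prop) (T : X -> X) :
  strong_accretive N E T ->
  exists q, [/\ 0 <= q, q < 1 &
    forall z x y, E x -> E y -> N (x - y) z <= q * N ((x + T x) - (y + T y)) z].
Proof.
move=> [k [k_gt0 [k_lt1 T_acc]]]; have k2 : 0 < 2 - k by lra.
exists (2 - k)^-1; split; first by rewrite invr_ge0 ltW.
  by rewrite invf_lt1 //; lra.
move=> z x y Ex Ey; rewrite -(ler_pM2l k2) mulrA mulfV ?gt_eqF // mul1r.
have := T_acc z x y 2 Ex Ey ltac:(lra).
have -> : (2 : R) - 1 = 1 by lra.
rewrite norm2Z (ger0_norm (ltW k2)) scale1r.
by rewrite opprD addrACA.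
Qed.

Section Contraction.
Variables (E : X -> Prop) (S : X -> X) (q : R).
Hypotheses (E_closed : closed2 N E) (SE : forall x, E x -> E (S x)).
Hypotheses (q_ge0 : 0 <= q) (q_lt1 : q < 1).
Hypothesis S_contr : forall z x y, E x -> E y -> N (S x - S y) z <= q * N (x - y) z.

Lemma contraction2_line x0 s : E x0 -> S x0 - x0 != 0 -> E (x0 + s *: (S x0 - x0)) ->
  exists r, S (x0 + s *: (S x0 - x0)) = x0 + r *: (S x0 - x0).
Proof.
set d := S x0 - x0; set y := x0 + s *: d => Ex0 d0 Ey.
have : N (S y - S x0) d <= 0.
  have -> : 0 = q * N (y - x0) d.
    by rewrite /y addrC addKr norm2Z norm2xx !mulr0.
  exact: S_contr.
move=> Sy_le0; have /norm2_eq0 Sy_d : N (S y - S x0) d = 0.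
  by apply/le_anti; rewrite Sy_le0 norm2_ge0.
have [r er] := lin_dep_scaler d0 Sy_d.
by exists (1 + r); rewrite scalerDl scale1r -er addrA /d !subrKC.
Qed.

Lemma contraction2_fixpoint : (exists x0, E x0) -> exists x, E x /\ S x = x.
Proof.
move=> [x0 Ex0]; have [Sx0|d0] := eqVneq (S x0 - x0) 0.
  by exists x0; split => //; apply/eqP; rewrite -subr_eq0 Sx0.
have [z dz] := exists_norm2_gt0 d0.
set d := S x0 - x0 in d0 dz.
pose L := [set s : R | E (x0 + s *: d)].
have /choice[g Hg] : forall s, exists r, L s -> S (x0 + s *: d) = x0 + r *: d.
  move=> s; have [Ls|] := pselect (L s); last by exists 0.
  by have [r ->] := contraction2_line Ex0 d0 Ls; exists r.
have gL s : L s -> L (g s) by move=> Ls; rewrite /L /= -Hg //; exact: SE.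
have glip s t : L s -> L t -> `|g s - g t| <= q * `|s - t|.
  move=> Ls Lt; rewrite -(ler_pM2r dz) -mulrA -!(norm2_line x0).
  by rewrite -(Hg _ Ls) -(Hg _ Lt); exact: S_contr.
have L_closed : closed L.
  apply: seq_closed_closed => u l Lu ul.
  exact: (E_closed Lu (conv2_line x0 d ul)).
have L0 : L !=set0 by exists 0; rewrite /L /= scale0r addr0.
have [s Ls gs] := closed_contraction_fixpoint L_closed L0 q_ge0 q_lt1 gL glip.
by exists (x0 + s *: d); rewrite Hg // gs.
Qed.

End Contraction.

End TwoNorm.

Theorem theorem3p12 (R : realType) (X : lmodType R) (N : X -> X -> R)
  (E : X -> Prop) (T : X -> X) :
  is_2norm N ->
  (exists x0, E x0) ->
  closed2 N E ->
  bounded2 N E ->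
  strong_accretive N E T ->
  (forall y, E y -> exists x, E x /\ x + T x = y) ->
  exists x, E x /\ T x = 0.
Proof.
move=> N2 E0 E_closed _ T_acc IT_onto.
have [q [q_ge0 q_lt1 T_res]] := strong_accretive_inv_lipschitz N2 T_acc.
have /choice[S HS] : forall y, exists x, E y -> E x /\ x + T x = y.
  move=> y; have [Ey|] := pselect (E y); last by exists y.
  by have [x Hx] := IT_onto y Ey; exists x.
have S_contr z x y : E x -> E y -> N (S x - S y) z <= q * N (x - y) z.
  move=> Ex Ey; rewrite -{2}(HS x Ex).2 -{2}(HS y Ey).2.
  by apply: T_res; [exact: (HS x Ex).1 | exact: (HS y Ey).1].
have [x [Ex Sx]] := contraction2_fixpoint N2 E_closed (fun x Ex => (HS x Ex).1)
  q_ge0 q_lt1 S_contr E0.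
exists x; split => //; apply: (addrI x).
by have := (HS x Ex).2; rewrite Sx addr0.
Qed.
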